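(* Let $D$ be a strongly connected digraph with $n$ vertices and exactly three complementarity eigenvalues. If $D$ contains a subdigraph isomorphic to the $\infty$-digraph $\infty(r,s)$, then $n=r+s-1$.
   Context: All digraphs are finite, without loops and without multiple arcs. For a digraph $D$ with adjacency matrix $A$ (on $n$ vertices), a real $\lambda$ is a complementarity eigenvalue if there is a nonzero $x\in\mathbb{R}^n$, $x\ge0$, with $Ax-\lambda x\ge 0$ and $\langle x,Ax-\lambda x\rangle=0$. Subdigraphs need not be induced. For $r,s\ge 2$, $\infty(r,s)$ is the digraph obtained from a directed cycle $\vec C_r$ and a directed cycle $\vec C_s$ by identifying one vertex of the first with one vertex of the second (so the two cycles share exactly one vertex). *)

From HB Require Import structures.
From mathcomp Require Import all_boot all_order all_algebra.
From mathcomp Require Import reals.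
Set Implicit Arguments. Unset Strict Implicit. Unset Printing Implicit Defensive.
Import Order.TTheory GRing.Theory Num.Theory.
Local Open Scope ring_scope.

(* A digraph on n vertices is an arc relation e : rel 'I_n
   (no multiple arcs by construction; loops excluded by a hypothesis). *)

Definition adjmx (R : realType) (n : nat) (e : rel 'I_n) : 'M[R]_n :=
  \matrix_(i, j) (e i j)%:R.

Definition compl_eig (R : realType) (n : nat) (A : 'M[R]_n) (lambda : R) : Prop :=
  exists x : 'cV[R]_n,
    [/\ x != 0,
        (forall i, 0 <= x i 0),
        (forall i, 0 <= (A *m x - lambda *: x) i 0) &
        \sum_i x i 0 * (A *m x - lambda *: x) i 0 = 0].

Definition strongly_connected (n : nat) (e : rel 'I_n) : Prop :=
  forall i j, connect e i j.

(* The infinity digraph infty(r,s) on vertices 0..r+s-2 (shared vertex 0):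
   first cycle  0 -> 1 -> ... -> r-1 -> 0,
   second cycle 0 -> r -> r+1 -> ... -> r+s-2 -> 0. *)
Definition infty_arc (r s : nat) (u v : nat) : bool :=
  [|| (u.+1 == v) && (v < r)%N,
      (u == r.-1) && (v == 0%N),
      (u == 0%N) && (v == r),
      [&& (r <= u)%N, u.+1 == v & (v <= r + s - 2)%N]
    | (u == r + s - 2)%N && (v == 0%N)].

Definition infty_digraph (r s : nat) : rel 'I_(r + s - 1) :=
  fun u v => infty_arc r s u v.

(* D contains a (not necessarily induced) subdigraph isomorphic to F:
   an injective vertex map sending arcs of F to arcs of D. *)
Definition contains_subdigraph (m n : nat) (F : rel 'I_m) (e : rel 'I_n) : Prop :=
  exists f : 'I_m -> 'I_n, injective f /\ forall u v, F u v -> e (f u) (f v).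
Arguments infty_digraph : clear implicits.

(* For a set P of vertices inducing a strongly connected subdigraph, let the
   Perron root of D[P] be the largest mu admitting a sub-eigenvector: a
   nonnegative nonzero x supported on P with mu x <= A x on P (Collatz-Wielandt).
   It exists by compactness of the normalised sub-eigenvectors, and a maximal
   sub-eigenvector is an eigenvector on P, since a strict inequality at one
   vertex can be spread along the arcs of D[P] and then used to raise mu.
   Extended by zero, it witnesses that the Perron root is a complementarity
   eigenvalue of D.  For P a proper subset of Q, the Perron vector of P is a
   sub-eigenvector for Q that is strict where an arc enters its support, so the
   Perron root of Q is strictly larger.  A vertex of the infinity digraph, its
   first cycle, the whole infinity digraph and V(D) induce strongly connected
   subdigraphs of D, and if n <> r + s - 1 each inclusion is proper: this gives
   four complementarity eigenvalues. *)

From HB Require Import structures.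
From mathcomp Require Import all_boot all_order all_algebra.
From mathcomp Require Import reals.
From mathcomp Require Import lra zify.
From mathcomp Require Import unstable topology normedtype.
From mathcomp Require classical_sets functions.
Set Implicit Arguments. Unset Strict Implicit. Unset Printing Implicit Defensive.
Import Order.TTheory GRing.Theory Num.Theory.
Import numFieldNormedType.Exports.
Local Open Scope ring_scope.

Section InducedStrong.
Variable T : finType.
Implicit Types (e : rel T) (P : {set T}).

Definition induced_strong e P :=
  {in P &, forall u v, connect [rel x y in P | e x y] u v}.

Lemma induced_strong_setT e : (forall u v, connect e u v) -> induced_strong e setT.
Proof.
by move=> sc u v _ _; rewrite (@eq_connect _ _ e) // => x y /=; rewrite !in_setT.
Qed.

Lemma induced_strong_set1 e v : induced_strong e [set v].
Proof. by move=> x y /set1P-> /set1P->; exact: connect0. Qed.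

Lemma induced_strong_entering_arc e P (Q : pred T) i k :
  induced_strong e P -> i \in P -> Q i -> k \in P -> ~~ Q k ->
  exists j l, [/\ j \in P, ~~ Q j, l \in P, Q l & e j l].
Proof.
move=> sP Pi Qi Pk; have /connectP[p] := sP k i Pk Pi.
elim: p k Pk => [|a p IHp] k Pk /=; first by move=> _ <-; rewrite Qi.
case/andP=> /andP[/andP[_ Pa] eka] pth iE nQk.
have [Qa|nQa] := boolP (Q a); first by exists k, a.
exact: IHp pth iE nQa.
Qed.

End InducedStrong.

Lemma induced_strong_imset (T T' : finType) (F : rel T) (e : rel T')
    (f : T -> T') (S : {set T}) :
  (forall u v, F u v -> e (f u) (f v)) ->
  induced_strong F S -> induced_strong e (f @: S).
Proof.
move=> hom sS _ _ /imsetP[u Su ->] /imsetP[v Sv ->].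
have /connectP[p pth ->] := sS u v Su Sv.
apply/connectP; exists (map f p); last by rewrite last_map.
elim: p u Su pth => //= w p IHp u Su /andP[/andP[/andP[_ Sw] Fuw] pth].
by rewrite !imset_f //= hom //= IHp.
Qed.

Lemma connect_succ_interval N (F : rel 'I_N) (a b : nat) :
  (forall u v : 'I_N, (a <= u)%N -> (v <= b)%N -> v = u.+1 :> nat -> F u v) ->
  forall u v : 'I_N, (a <= u <= v)%N -> (v <= b)%N -> connect F u v.
Proof.
move=> Fsucc u v /andP[au uv] vb.
have [d dE] : {d | (v - u)%N = d} by exists (v - u)%N.
elim: d u au uv dE => [|d IHd] u au uv dE.
  by have /val_inj-> : (u : nat) = v by lia.
have uN : (u.+1 < N)%N by have := ltn_ord v; lia.
apply: connect_trans (connect1 (Fsucc u (Ordinal uN) au _ erefl)) _ => /=; first lia.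
apply: IHd => /=; lia.
Qed.

Section InfinityDigraph.
Variables r s : nat.
Hypotheses (r_ge2 : (2 <= r)%N) (s_ge2 : (2 <= s)%N).
Local Notation N := (r + s - 1)%N.
Local Notation F := (infty_digraph r s).

Let hub_lt : (0 < N)%N. Proof. lia. Qed.
Let hub := Ordinal hub_lt.

Lemma infty_first_cycle_strong : induced_strong F [set u : 'I_N | (u < r)%N].
Proof.
pose F1 := [rel x y in [set u : 'I_N | (u < r)%N] | F x y].
have last1_lt : (r.-1 < N)%N by lia.
pose last1 := Ordinal last1_lt.
have along : forall u v : 'I_N, (u <= v)%N -> (v <= r.-1)%N -> connect F1 u v.
  move=> u v uv vr; apply: (@connect_succ_interval _ _ 0 r.-1) => //.
  by move=> x y _ yr yx; rewrite /F1 /= !inE /infty_digraph /infty_arc; lia.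
move=> u v; rewrite !inE => ur vr.
apply: (@connect_trans _ _ last1); first by apply: along => /=; lia.
apply: (@connect_trans _ _ hub); last by apply: along => /=; lia.
by apply: connect1; rewrite /= !inE /infty_digraph /infty_arc /=; lia.
Qed.

Lemma infty_strong : induced_strong F setT.
Proof.
apply: induced_strong_setT.
have first_cycle : forall u v : 'I_N, (u < r)%N -> (v < r)%N -> connect F u v.
  move=> u v ur vr; apply: connect_sub (infty_first_cycle_strong _ _); rewrite ?inE //.
  by move=> x y /andP[_ Fxy]; exact: connect1.
have along : forall u v : 'I_N, (r <= u <= v)%N -> (v <= r + s - 2)%N -> connect F u v.
  apply: connect_succ_interval => x y rx ys yx.
  by rewrite /infty_digraph /infty_arc; lia.
have first2_lt : (r < N)%N by lia.
have last2_lt : (r + s - 2 < N)%N by lia.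
pose first2 := Ordinal first2_lt; pose last2 := Ordinal last2_lt.
suff [to_hub from_hub] : (forall u, connect F u hub) /\ (forall v, connect F hub v).
  by move=> u v; exact: connect_trans (to_hub u) (from_hub v).
split=> [u|v].
  have [ur|ru] := ltnP u r; first by apply: first_cycle => /=; lia.
  apply: (@connect_trans _ _ last2); first by apply: along; have := ltn_ord u; rewrite /=; lia.
  by apply: connect1; rewrite /infty_digraph /infty_arc /=; lia.
have [vr|rv] := ltnP v r; first by apply: first_cycle => /=; lia.
apply: (@connect_trans _ _ first2); last by apply: along; have := ltn_ord v; rewrite /=; lia.
by apply: connect1; rewrite /infty_digraph /infty_arc /=; lia.
Qed.

Lemma infty_proper_chain : exists u : 'I_N,
  [set u] \proper [set v : 'I_N | (v < r)%N] /\ [set v : 'I_N | (v < r)%N] \proper setT.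
Proof.
have one_lt : (1 < N)%N by lia.
have r_lt : (r < N)%N by lia.
exists hub; split; apply/properP; split.
- by rewrite sub1set inE /=; lia.
- by exists (Ordinal one_lt); rewrite !inE //=.
- exact: subsetT.
- by exists (Ordinal r_lt); rewrite !inE //= ltnn.
Qed.

End InfinityDigraph.

Lemma imset_setT_proper m n (f : 'I_m -> 'I_n) :
  injective f -> n != m -> f @: setT \proper setT.
Proof.
move=> f_inj; apply: contraNT; rewrite properT negbK => /eqP fT.
by rewrite -[n]card_ord -cardsT -fT card_imset // cardsT card_ord.
Qed.

Section PerronRoot.
Variables (R : realType) (n : nat) (e : rel 'I_n).
Implicit Types (P Q : {set 'I_n}) (x y : 'I_n -> R) (mu lam : R).

Definition adj_mul x i : R := \sum_j (e i j)%:R * x j.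

Definition semipos_on P x :=
  [/\ forall i, 0 <= x i, forall i, i \notin P -> x i = 0 & exists k, 0 < x k].

Definition subeigvec P mu x :=
  semipos_on P x /\ {in P, forall i, mu * x i <= adj_mul x i}.

Definition eigvec P lam x :=
  semipos_on P x /\ {in P, forall i, adj_mul x i = lam * x i}.

Definition strict_set P mu x := [set i in P | mu * x i < adj_mul x i].

Definition perron_root P lam :=
  (exists x, eigvec P lam x) /\ forall mu y, subeigvec P mu y -> mu <= lam.

Lemma adj_mul_ge0 x : (forall j, 0 <= x j) -> forall i, 0 <= adj_mul x i.
Proof. by move=> x0 i; apply: sumr_ge0 => j _; rewrite mulr_ge0 ?ler0n. Qed.

Lemma eigvec_compl_eig P lam x : eigvec P lam x -> compl_eig (adjmx R e) lam.
Proof.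
move=> [[x0 xP [k xk]] xeig].
have slackE i : (adjmx R e *m \col_j x j - lam *: \col_j x j) i 0 =
                adj_mul x i - lam * x i.
  by rewrite !mxE; congr (_ - _); apply: eq_bigr => j _; rewrite !mxE.
exists (\col_j x j); split.
- by apply/eqP => /matrixP/(_ k 0); rewrite !mxE => xk0; rewrite xk0 ltxx in xk.
- by move=> i; rewrite mxE.
- move=> i; rewrite slackE; have [Pi|nPi] := boolP (i \in P).
    by rewrite xeig // subrr.
  by rewrite xP // mulr0 subr0 adj_mul_ge0.
- apply: big1 => i _; rewrite slackE mxE; have [Pi|nPi] := boolP (i \in P).
    by rewrite xeig // subrr mulr0.
  by rewrite xP // mul0r.
Qed.

Lemma perron_root_compl_eig P lam : perron_root P lam -> compl_eig (adjmx R e) lam.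
Proof. by case=> [[x /eigvec_compl_eig]]. Qed.

Lemma pos_lower_bound (I : finType) (D : {pred I}) (h : I -> R) :
  {in D, forall i, 0 < h i} -> exists2 d, 0 < d & {in D, forall i, d <= h i}.
Proof.
move=> h_gt0; exists (\big[Num.min/1]_(i in D) h i).
  by elim/big_ind: _ => [|a b a0 b0|i /h_gt0//]; rewrite ?ltr01 ?lt_min ?a0 ?b0.
by move=> i Di; rewrite (bigD1 i) //= ge_min lexx.
Qed.

Lemma subeigvec_raise_strict P mu x :
  subeigvec P mu x -> P \subset strict_set P mu x ->
  exists2 mu', mu < mu' & subeigvec P mu' x.
Proof.
move=> [xpos xsub] /subsetP Pstrict; have [x0 _ _] := xpos.
have [|d d_gt0 d_le] :=
  @pos_lower_bound _ (mem P) (fun i => (adj_mul x i - mu * x i) / (1 + x i)).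
  move=> i Pi; apply: divr_gt0; last by have := x0 i; lra.
  by have := Pstrict i Pi; rewrite inE Pi subr_gt0.
exists (mu + d); first lra.
split=> // i Pi; have := d_le i Pi; rewrite ler_pdivlMr; last by have := x0 i; lra.
by have := x0 i; nra.
Qed.

Lemma adj_mul_bump x i eps l :
  adj_mul (fun k => x k + (k == i)%:R * eps) l = adj_mul x l + (e l i)%:R * eps.
Proof.
rewrite /adj_mul; under eq_bigr do rewrite mulrDr.
rewrite big_split /=; congr (_ + _).
rewrite (bigD1 i) //= eqxx mul1r big1 ?addr0 // => k /negbTE ->.
by rewrite mul0r mulr0.
Qed.

Lemma subeigvec_bump P mu x i j :
  subeigvec P mu x -> i \in strict_set P mu x -> j \in P -> e j i ->
  exists y, subeigvec P mu y /\ j |: strict_set P mu x \subset strict_set P mu y.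
Proof.
move=> [[x0 xP [k xk]] xsub]; rewrite inE => /andP[Pi gap_i] Pj eji.
pose eps := (adj_mul x i - mu * x i) / (`|mu| + 1).
have norm1_gt0 : 0 < `|mu| + 1 by rewrite ltr_wpDl.
have eps_gt0 : 0 < eps by rewrite divr_gt0 ?subr_gt0.
have mu_eps : mu * eps < adj_mul x i - mu * x i.
  have epsE : eps * (`|mu| + 1) = adj_mul x i - mu * x i by rewrite divfK ?gt_eqF.
  by have := ler_norm mu; nra.
pose y k := x k + (k == i)%:R * eps.
have y_sub l : l \in P -> mu * y l <= adj_mul y l /\
    ((mu * x l < adj_mul x l) || e l i -> mu * y l < adj_mul y l).
  move=> Pl; rewrite /y adj_mul_bump; have := xsub l Pl.
  have : 0 <= (e l i)%:R * eps :> R by rewrite mulr_ge0 ?ler0n ?ltW.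
  case: eqP => [->|_] /=; first by rewrite mul1r mulrDr => ? ?; split=> [|_]; lra.
  by case: (e l i); rewrite ?mul1r ?mul0r ?addr0 ?orbT ?orbF => ? ?; split=> //; lra.
exists y; split.
  split; first split.
  - by move=> l; rewrite /y; have := x0 l; case: eqP => _ /=; lra.
  - by move=> l nPl; rewrite /y xP //; case: eqP => [el|_] /=; [rewrite el Pi in nPl|lra].
  - by exists k; rewrite /y; have := x0 k; case: eqP => _ /=; lra.
  - by move=> l Pl; case: (y_sub l Pl).
apply/subsetP => l; rewrite !inE => /orP[/eqP->|/andP[Pl gap_l]].
  by rewrite Pj (y_sub j Pj).2 // eji orbT.
by rewrite Pl (y_sub l Pl).2 // gap_l.
Qed.

Lemma subeigvec_raise P mu x :
  induced_strong e P -> subeigvec P mu x -> strict_set P mu x != set0 ->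
  exists2 mu', mu < mu' & exists y, subeigvec P mu' y.
Proof.
move=> sP; have [m] := ubnP #|P :\: strict_set P mu x|.
elim: m x => // m IHm x lt_m xsub /set0Pn[i iS].
have [/(subeigvec_raise_strict xsub)[mu' ? ?]|] := boolP (P \subset strict_set P mu x).
  by exists mu'; last exists x.
case/subsetPn=> k Pk kNS.
have Pi : i \in P by move: iS; rewrite inE => /andP[].
have [j [l [Pj jNS _ lS ejl]]] :=
  induced_strong_entering_arc (Q := mem (strict_set P mu x)) sP Pi iS Pk kNS.
have [y [ysub grow]] := subeigvec_bump xsub lS Pj ejl.
have jS : j \in strict_set P mu y by apply: (subsetP grow); rewrite setU11.
apply: (IHm y) ysub _; last by apply/set0Pn; exists j.
suff /proper_card : P :\: strict_set P mu y \proper P :\: strict_set P mu x by lia.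
apply/properP; split; first by apply/setDS/(subset_trans _ grow)/subsetUr.
by exists j; rewrite inE ?jS ?jNS ?Pj.
Qed.

Lemma subeigvec_anti P mu mu' x : mu <= mu' -> subeigvec P mu' x -> subeigvec P mu x.
Proof.
move=> le [[x0 ? ?] xsub]; split=> // i Pi.
exact: le_trans (ler_wpM2r (x0 i) le) (xsub i Pi).
Qed.

Lemma subeigvec_bounded P mu x : subeigvec P mu x -> mu <= n%:R.
Proof.
move=> [[x0 xP [k xk]] xsub].
have sum_gt0 : 0 < \sum_j x j.
  by rewrite (bigD1 k) //=; apply: (lt_le_trans xk); rewrite lerDl sumr_ge0.
have row_le i : mu * x i <= \sum_j x j.
  have [Pi|nPi] := boolP (i \in P); last by rewrite xP // mulr0 ltW.
  apply: le_trans (xsub i Pi) _; apply: ler_sum => j _.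
  by case: (e i j); rewrite ?mul1r ?mul0r.
rewrite -(ler_pM2r sum_gt0) mulr_sumr.
by apply: le_trans (ler_sum _ (fun i _ => row_le i)) _; rewrite sumr_const card_ord mulr_natl.
Qed.

Lemma semipos_on_pos P x k : semipos_on P x -> 0 < x k -> k \in P.
Proof. by case=> _ xP _ xk; apply: contraTT xk => /xP->; rewrite ltxx. Qed.

Lemma eigvec_strict_superset P Q lam x :
  P \proper Q -> induced_strong e Q -> eigvec P lam x ->
  subeigvec Q lam x /\ strict_set Q lam x != set0.
Proof.
move=> /properP[/subsetP PQ [q Qq nPq]] sQ [xpos xeig].
have [x0 xP [k xk]] := xpos.
split.
  split=> [|i Qi].
    split=> [//|i nQi|]; last by exists k.
    by apply: xP; apply: contra nQi; exact: PQ.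
  have [Pi|nPi] := boolP (i \in P); first by rewrite xeig.
  by rewrite xP // mulr0 adj_mul_ge0.
have xq : ~~ (0 < x q) by rewrite xP ?ltxx.
have [j [l [Qj xj _ xl ejl]]] := induced_strong_entering_arc (Q := fun i => 0 < x i)
  sQ (PQ k (semipos_on_pos xpos xk)) xk Qq xq.
apply/set0Pn; exists j; rewrite inE Qj /=.
have -> : x j = 0 by apply/le_anti; rewrite x0 andbT leNgt.
rewrite mulr0 /adj_mul (bigD1 l) //= ejl mul1r; apply: (lt_le_trans xl).
by rewrite lerDl sumr_ge0 // => i _; rewrite mulr_ge0 ?ler0n.
Qed.

Lemma perron_root_lt P Q lamP lamQ :
  P \proper Q -> induced_strong e Q -> perron_root P lamP -> perron_root Q lamQ ->
  lamP < lamQ.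
Proof.
move=> PQ sQ [[x xeig] _] [_ Qmax].
have [xsub strict] := eigvec_strict_superset PQ sQ xeig.
have [mu' lt_mu' [y ysub]] := subeigvec_raise sQ xsub strict.
exact: lt_le_trans lt_mu' (Qmax _ _ ysub).
Qed.

End PerronRoot.

Section PerronRootExistence.
(* Imported only here: [classical_sets] shadows finset's [setT], [set0] and [subsetP]. *)
Import classical_sets functions.
Local Open Scope classical_set_scope.
Variables (R : realType) (n : nat) (e : rel 'I_n).
Implicit Types (P : {set 'I_n}) (mu lam : R) (v : 'rV[R]_n).

Definition subeig_simplex P mu : set 'rV[R]_n :=
  [set v | [/\ forall i, 0 <= v ord0 i, forall i, i \notin P -> v ord0 i = 0,
             \sum_i v ord0 i = 1 &
             {in P, forall i, mu * v ord0 i <= adj_mul e (v ord0) i}]].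

Lemma subeig_simplex_subeigvec P mu v :
  subeig_simplex P mu v -> subeigvec e P mu (v ord0).
Proof.
case=> v0 vP vsum vsub; split=> //; split=> //.
have [k vk|all_le0] := pickP [pred k | 0 < v ord0 k]; first by exists k.
suff : \sum_i v ord0 i = 0 by rewrite vsum => /eqP; rewrite oner_eq0.
by apply: big1 => i _; apply/le_anti; rewrite v0 andbT leNgt; apply/negbT/all_le0.
Qed.

Lemma subeigvec_normalize P mu x :
  subeigvec e P mu x -> subeig_simplex P mu (\row_j (x j / \sum_k x k)).
Proof.
case=> [[x0 xP [k xk]] xsub].
have sum_gt0 : 0 < \sum_j x j.
  by rewrite (bigD1 k) //=; apply: (lt_le_trans xk); rewrite lerDl sumr_ge0.
split=> [i|i nPi||i Pi]; rewrite ?mxE.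
- by apply: divr_ge0; [exact: x0 | exact: ltW].
- by rewrite xP ?mul0r.
- by under eq_bigr do rewrite mxE; rewrite -mulr_suml divff ?gt_eqF.
- have -> : adj_mul e ((\row_j (x j / \sum_k x k)) ord0) i = adj_mul e x i / \sum_k x k.
    by rewrite /adj_mul mulr_suml; apply: eq_bigr => j _; rewrite mxE mulrA.
  by rewrite mulrA ler_pM2r ?invr_gt0 ?xsub.
Qed.

Lemma subeig_simplex_anti P mu mu' :
  mu <= mu' -> subeig_simplex P mu' `<=` subeig_simplex P mu.
Proof.
move=> le v [v0 vP vsum vsub]; split=> // i Pi.
exact: le_trans (ler_wpM2r (v0 i) le) (vsub i Pi).
Qed.

Lemma subeig_simplex_sub_cube P mu :
  subeig_simplex P mu `<=` [set v | forall i, `[(0:R), 1]%classic (v ord0 i)].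
Proof.
move=> v [v0 _ vsum _] i; rewrite /= in_itv /= v0 -vsum (bigD1 i) //= lerDl.
exact: sumr_ge0.
Qed.

Lemma closed_fun_le (T : topologicalType) (f g : T -> R) :
  continuous f -> continuous g -> closed [set t | f t <= g t].
Proof.
move=> fc gc; have -> : [set t | f t <= g t] = (g - f) @^-1` [set r | 0 <= r].
  by apply/seteqP; split=> t /=; rewrite subr_ge0.
by apply: closed_comp => [t _|]; [exact: continuousB (gc t) (fc t) | exact: closed_ge].
Qed.

Lemma closed_fun_eq (T : topologicalType) (f : T -> R) c :
  continuous f -> closed [set t | f t = c].
Proof.
move=> fc; change (closed (f @^-1` [set r | r = c])).
by apply: closed_comp => [t _|]; [exact: fc | exact: closed_eq].
Qed.

Lemma row_comb_continuous (c : 'I_n -> R) :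
  continuous (fun v : 'rV[R]_n => \sum_j c j * v ord0 j).
Proof.
apply: continuous_big => [|j _]; first exact: add_continuous.
by move=> v; apply: continuousM; [exact: cst_continuous | exact: coord_continuous].
Qed.

Lemma subeig_simplex_closed P mu : closed (subeig_simplex P mu).
Proof.
have -> : subeig_simplex P mu =
  \bigcap_i [set v | 0 <= v ord0 i] `&`
  \bigcap_(i in [set i | i \notin P]) [set v | v ord0 i = 0] `&`
  [set v | \sum_i 1 * v ord0 i = 1] `&`
  \bigcap_(i in [set i | i \in P]) [set v | mu * v ord0 i <= adj_mul e (v ord0) i].
  apply/seteqP; split=> v.
    case=> v0 vP vsum vsub; split; first split; first split.
    - by move=> i _; exact: v0.
    - by move=> i; exact: vP.
    - by rewrite /= -[RHS]vsum; apply: eq_bigr => i _; rewrite mul1r.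
    - by move=> i; exact: vsub.
  case=> [[[v0 vP] vsum] vsub]; split=> [i|i||i]; [exact: v0 | exact: vP | | exact: vsub].
  by rewrite -[RHS]vsum; apply: eq_bigr => i _; rewrite mul1r.
have coord_cont i : continuous (fun v : 'rV[R]_n => v ord0 i) by exact: coord_continuous.
apply: closedI; first apply: closedI; first apply: closedI.
- by apply: closed_bigI => i _; apply: closed_fun_le => //; exact: cst_continuous.
- by apply: closed_bigI => i _; exact: closed_fun_eq.
- exact/closed_fun_eq/row_comb_continuous.
- apply: closed_bigI => i _; apply: closed_fun_le; last exact: row_comb_continuous.
  by move=> v; apply: continuousM; [exact: cst_continuous | exact: coord_cont].
Qed.

Lemma subeigvec_left_closed P lam :
  (forall mu, mu < lam -> exists x, subeigvec e P mu x) ->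
  exists x, subeigvec e P lam x.
Proof.
move=> below.
have cube_compact : compact [set v : 'rV[R]_n | forall i, `[(0:R), 1]%classic (v ord0 i)].
  exact: (@rV_compact _ n (fun=> `[(0:R), 1]%classic) (fun=> @segment_compact R 0 1)).
have [v v_in] : \bigcap_(mu in [set mu | mu < lam]) subeig_simplex P mu !=set0.
  move: cube_compact; rewrite compact_In0; apply.
    exists (subeig_simplex P) => mu _; first exact: subeig_simplex_closed.
    by apply/seteqP; split=> [w wK|w []//]; split=> //; exact: subeig_simplex_sub_cube wK.
  move=> D D_lt; pose m := \big[Num.max/(lam - 1)]_(mu <- finmap.enum_fset D) mu.
  have m_lt : m < lam.
    rewrite /m big_seq; apply: bigmax_lt => [|mu /D_lt]; [lra | by rewrite inE].
  have [x xsub] := below m m_lt.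
  exists (\row_j (x j / \sum_k x k)) => mu /= muD.
  apply: subeig_simplex_anti (subeigvec_normalize xsub).
  by rewrite /m big_seq; apply: le_bigmax_seq.
exists (v ord0); apply: subeig_simplex_subeigvec.
have [v0 vP vsum _] : subeig_simplex P (lam - 1) v by apply: v_in => /=; lra.
split=> // i Pi; have [vi0|vi_neq0] := eqVneq (v ord0 i) 0.
  by rewrite vi0 mulr0 adj_mul_ge0.
have vi_gt0 : 0 < v ord0 i by rewrite lt_def vi_neq0 v0.
rewrite -ler_pdivlMr //; apply/ler_ltP => mu mu_lt; rewrite ler_pdivlMr //.
by have [_ _ _] := v_in mu mu_lt; apply.
Qed.

Lemma perron_root_exists P k :
  induced_strong e P -> k \in P -> exists lam, perron_root e P lam.
Proof.
move=> sP Pk; pose L := [set mu : R | exists x, subeigvec e P mu x].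
have L0 : L 0.
  exists (fun i => (i == k)%:R); split; first split.
  - by move=> i; exact: ler0n.
  - by move=> i nPi; case: eqP => // ik; rewrite ik Pk in nPi.
  - by exists k; rewrite eqxx ltr01.
  - by move=> i _; rewrite mul0r adj_mul_ge0 // => j; exact: ler0n.
have L_sup : has_sup L by split; [exists 0 | exists n%:R => mu [x /subeigvec_bounded]].
have [x [xpos xsub]] : exists x, subeigvec e P (sup L) x.
  apply: subeigvec_left_closed => mu mu_lt.
  have gap : 0 < sup L - mu by rewrite subr_gt0.
  have [mu' [y ysub] lt_mu'] := sup_adherent gap L_sup.
  by exists y; apply: subeigvec_anti ysub; lra.
have L_ub mu y : subeigvec e P mu y -> mu <= sup L.
  by move=> ysub; apply: sup_upper_bound => //; exists y.
exists (sup L); split=> //; exists x; split=> // i Pi.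
apply/eqP; rewrite eq_le xsub // andbT leNgt; apply/negP => lt_i.
have [|mu' lt_mu' [y /L_ub]] := subeigvec_raise sP (conj xpos xsub) _.
  by apply/set0Pn; exists i; rewrite inE Pi.
by rewrite leNgt lt_mu'.
Qed.

End PerronRootExistence.

Lemma perron_root_grow (R : realType) n (e : rel 'I_n) (P Q : {set 'I_n}) (lam : R) :
  P \proper Q -> induced_strong e Q -> perron_root e P lam ->
  exists2 lam', lam < lam' & perron_root e Q lam'.
Proof.
move=> PQ sQ rootP; have [[x [xpos _]] _] := rootP; have [_ _ [k xk]] := xpos.
have Qk : k \in Q by apply: (subsetP (proper_sub PQ)); exact: semipos_on_pos xk.
have [lam' rootQ] := perron_root_exists R sQ Qk.
by exists lam'; first exact: perron_root_lt PQ sQ rootP rootQ.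
Qed.

Lemma lt_chain4_notin3 (d : Order.disp_t) (T : porderType d) (l1 l2 l3 a b c d' : T) :
  (a < b)%O -> (b < c)%O -> (c < d')%O ->
  [\/ a = l1, a = l2 | a = l3] -> [\/ b = l1, b = l2 | b = l3] ->
  [\/ c = l1, c = l2 | c = l3] -> [\/ d' = l1, d' = l2 | d' = l3] -> False.
Proof.
move=> ab bc cd; have ac := lt_trans ab bc; have bd := lt_trans bc cd.
have ad := lt_trans ac cd.
by do 4!case=> ?; subst; rewrite ?ltxx in ab bc cd ac bd ad.
Qed.

Theorem mainTheorem4 (R : realType) (n : nat) (e : rel 'I_n) (r s : nat) :
  irreflexive e ->
  strongly_connected e ->
  (exists l1 l2 l3 : R,
      [/\ l1 != l2, l1 != l3, l2 != l3 &
          forall l : R, compl_eig (adjmx R e) l <-> [\/ l = l1, l = l2 | l = l3]]) ->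
  (2 <= r)%N -> (2 <= s)%N ->
  contains_subdigraph (infty_digraph r s) e ->
  n = (r + s - 1)%N.
Proof.
move=> _ sc [l1 [l2 [l3 [_ _ _ spec]]]] r2 s2 [f [f_inj f_hom]].
apply/eqP; apply: contraT => n_neq; exfalso.
have [u [S0S1 S1T]] := infty_proper_chain r2 s2.
have P01 := imset_proper (in2W f_inj) S0S1.
have P12 := imset_proper (in2W f_inj) S1T.
have P23 := imset_setT_proper f_inj n_neq.
have image_strong := induced_strong_imset f_hom.
have fu_in : f u \in f @: [set u] by rewrite imset_f ?set11.
have [lam0 root0] :=
  perron_root_exists R (image_strong _ (@induced_strong_set1 _ _ u)) fu_in.
have [lam1 lt01 root1] :=
  perron_root_grow P01 (image_strong _ (infty_first_cycle_strong r2 s2)) root0.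
have [lam2 lt12 root2] := perron_root_grow P12 (image_strong _ (infty_strong r2 s2)) root1.
have [lam3 lt23 root3] := perron_root_grow P23 (induced_strong_setT sc) root2.
have in_spec P lam : perron_root e P lam -> [\/ lam = l1, lam = l2 | lam = l3].
  by move=> /perron_root_compl_eig /spec.
exact: (lt_chain4_notin3 lt01 lt12 lt23 (in_spec _ _ root0) (in_spec _ _ root1)
  (in_spec _ _ root2) (in_spec _ _ root3)).
Qed.
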